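(* Let $G=(V,E)$ be a finite graph and $\varepsilon$ an orientation of $G$. The number of orientations of $G$ that are Eulerian equivalent to $\varepsilon$ equals the number of flows of $(G,\varepsilon)$ with values in $\{0,1\}$: \[\#[\varepsilon]=\bar\varphi_\varepsilon(G,1)=|\bar\Delta^+_{\mathrm{FL}}(G,\varepsilon)\cap\mathbb Z^E|.\]
   Context: An orientation assigns each edge (including loops) one of its two directions; $\varepsilon(v,e)=1$ ($-1$) if non-loop $e$ points out of (into) end-vertex $v$, $0$ otherwise. A flow of $(G,\varepsilon)$ with values in a set of reals is $f:E\to\mathbb R$ with $\sum_e m_{v,e}f(e)=0$ for all $v$, $m_{v,e}=\varepsilon(v,e)$ for non-loops and $0$ for loops. $\bar\Delta^+_{\mathrm{FL}}(G,\varepsilon)=\{f \text{ real flow}:0\le f(e)\le1\ \forall e\}$; $\bar\varphi_\varepsilon(G,q)$ is the number of integer flows with $0\le f(e)\le q$ for all $e$. $[\varepsilon]$ is the set of orientations Eulerian equivalent to $\varepsilon$, where two orientations are Eulerian equivalent if the spanning subgraph formed by the edges on which they differ is directed Eulerian (in-degree equals out-degree at each vertex, loops contributing one of each) with respect to either of them. *)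

From mathcomp Require Import all_boot all_order all_algebra.
Set Implicit Arguments. Unset Strict Implicit. Unset Printing Implicit Defensive.
Import GRing.Theory Num.Theory.
Local Open Scope ring_scope.

(* A finite graph (loops and multiple edges allowed): vertex set V, edge set E,
   each edge e has an (unordered) pair of end-vertices given by [ends e].
   An orientation assigns to each edge one of its two directions: o e = true
   means e is directed (ends e).1 -> (ends e).2, o e = false means the reverse.
   For a loop the two directions are distinct orientations as well. *)
Section Graph.
Variables (V E : finType) (ends : E -> V * V).

Definition orientation := {ffun E -> bool}.

Definition tail (o : orientation) (e : E) : V :=
  if o e then (ends e).1 else (ends e).2.
Definition head (o : orientation) (e : E) : V :=
  if o e then (ends e).2 else (ends e).1.

Definition is_loop (e : E) : bool := (ends e).1 == (ends e).2.

Definition inc (o : orientation) (v : V) (e : E) : int :=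
  if is_loop e then 0
  else ((tail o e == v)%:R - (head o e == v)%:R)%R.

Definition is_int_flow (o : orientation) (f : E -> int) : bool :=
  [forall v, \sum_(e : E) inc o v e * f e == 0].

Definition phibar (o : orientation) (q : nat) : nat :=
  #|[set f : {ffun E -> 'I_q.+1} | is_int_flow o (fun e => (val (f e))%:Z)]|.

(* the spanning subgraph with edge set D is directed Eulerian w.r.t. o:
   out-degree = in-degree at every vertex, a loop contributing one to each *)
Definition eulerian_on (o : orientation) (D : {set E}) : bool :=
  [forall v, #|[set e in D | tail o e == v]| == #|[set e in D | head o e == v]|].

Definition eulerian_equiv (o o' : orientation) : bool :=
  eulerian_on o [set e | o e != o' e].

Definition eclass (o : orientation) : {set orientation} :=
  [set o' | eulerian_equiv o o'].
End Graph.

From Pilot Require Import Defs.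
From mathcomp Require Import all_boot all_order all_algebra.
Import GRing.Theory Num.Theory.
Local Open Scope ring_scope.

(* Both sides count the Eulerian edge sets D of (G, eps): an orientation o in
   [eps] is determined by the set of edges on which it differs from eps, and a
   {0,1}-flow is determined by its support. Conversely the indicator of D is a
   flow exactly when D is Eulerian, since sum_e m_{v,e} 1_D(e) is the
   out-degree minus the in-degree of v in D. *)

Section EulerianClass.
Variables (V E : finType) (ends : E -> V * V).
Implicit Types (o : orientation E) (D : {set E}) (v : V).

Lemma incE o v e :
  inc ends o v e = (Defs.tail ends o e == v)%:R - (Defs.head ends o e == v)%:R.
Proof.
rewrite /inc; case: ifP => // /eqP loop_e.
by rewrite /Defs.tail /Defs.head; case: (o e); rewrite loop_e subrr.
Qed.

Lemma sum_inc_set o v D :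
  \sum_(e in D) inc ends o v e =
    #|[set e in D | Defs.tail ends o e == v]|%:R
  - #|[set e in D | Defs.head ends o e == v]|%:R.
Proof.
have sum_indicator (P : pred E) :
    \sum_(e in D) (P e)%:R = #|[set e in D | P e]|%:R :> int.
  rewrite -sum1_card natr_sum [RHS]big_mkcond [LHS]big_mkcond /=.
  by apply: eq_bigr => e _; rewrite inE; case: (e \in D); case: (P e).
by under eq_bigr do rewrite incE; rewrite sumrB !sum_indicator.
Qed.

Lemma int_flow_indicator o D (f : E -> int) :
  (forall e, f e = (e \in D)%:R) -> is_int_flow ends o f = eulerian_on ends o D.
Proof.
move=> fE; apply: eq_forallb => v.
rewrite (eq_bigr (fun e => if e \in D then inc ends o v e else 0)); last first.
  by move=> e _; rewrite fE; case: (e \in D); rewrite ?mulr1 ?mulr0.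
by rewrite -big_mkcond sum_inc_set subr_eq0 eqr_nat.
Qed.

Definition flip o D : orientation E := [ffun e => o e (+) (e \in D)].

Lemma flip_diff o D : [set e | o e != flip o D e] = D.
Proof. by apply/setP => e; rewrite !inE ffunE; case: (o e); case: (e \in D). Qed.

Lemma card_eclass o :
  #|eclass ends o| = #|[set D | eulerian_on ends o D]|.
Proof.
have flip_inj : injective (flip o).
  by move=> D1 D2 eqD; rewrite -(flip_diff o D1) eqD flip_diff.
rewrite -(card_imset _ flip_inj); apply: eq_card => o'.
rewrite !inE /eulerian_equiv; apply/idP/imsetP => [eq_o' | [D]].
  exists [set e | o e != o' e]; first by rewrite inE.
  by apply/ffunP => e; rewrite ffunE inE; case: (o e); case: (o' e).
by rewrite inE => eulD ->; rewrite flip_diff.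
Qed.

Definition indicator D : {ffun E -> 'I_2} := [ffun e => inord (e \in D)].

Lemma indicatorE D e : val (indicator D e) = (e \in D) :> nat.
Proof. by rewrite ffunE /= inordK // ltnS leq_b1. Qed.

Lemma indicator_support (f : {ffun E -> 'I_2}) :
  indicator [set e | val (f e) == 1%N] = f.
Proof.
apply/ffunP => e; apply: val_inj; rewrite indicatorE inE.
by case: (f e) => [[|[|]]].
Qed.

Lemma phibar1_eulerian o :
  phibar ends o 1 = #|[set D | eulerian_on ends o D]|.
Proof.
have indicator_inj : injective indicator.
  move=> D1 D2 eqD; apply/setP => e.
  move/ffunP/(_ e)/(congr1 val): eqD; rewrite !indicatorE.
  by case: (e \in D1); case: (e \in D2).
rewrite /phibar -(card_imset _ indicator_inj); apply: eq_card => f.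
rewrite inE; apply/idP/imsetP => [flow_f | [D]].
  exists [set e | val (f e) == 1%N]; last by rewrite indicator_support.
  rewrite inE -(int_flow_indicator o _ (fun e => (val (f e))%:Z)) // => e.
  by rewrite inE; case: (f e) => [[|[|]]].
rewrite inE => eulD ->; rewrite (int_flow_indicator o D) // => e.
by rewrite indicatorE; case: (e \in D).
Qed.

End EulerianClass.

Theorem proposition5p5 (V E : finType) (ends : E -> V * V)
    (eps : orientation E) :
  #|eclass ends eps| = phibar ends eps 1.
Proof. by rewrite card_eclass phibar1_eulerian. Qed.
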